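(* Let $d>0$, $N\ge 1$, let $\mathcal{S}=\{s_1,s_2,s_3,s_4\}$ be the 4-PAM constellation with $s_1=-3d$, $s_2=-d$, $s_3=d$, $s_4=3d$, labeled by any Gray labeling. For any two distinct sequences $\boldsymbol{x},\hat{\boldsymbol{x}}\in\mathcal{S}^N$, the asymptotic loss satisfies $\mathsf{L}(\boldsymbol{x},\hat{\boldsymbol{x}})\le 1.25$ dB.
   Context: A labeling is a bijection $\Phi_{\mathcal{S}}:\{0,1\}^2\to\mathcal{S}$, described by $\boldsymbol{q}=[q_1,q_2,q_3,q_4]$, where $q_i$ is the integer whose two-bit binary representation (most significant bit first) is $\Phi_{\mathcal{S}}^{-1}(s_i)$. The Gray labelings are $[0,1,3,2]$, $[0,2,3,1]$, $[1,0,2,3]$, $[2,0,1,3]$. For $\boldsymbol{x}=[x[1],\dots,x[N]]$, $\hat{\boldsymbol{x}}=[\hat{x}[1],\dots,\hat{x}[N]]\in\mathcal{S}^N$ and each $k$ with $x[k]\neq\hat{x}[k]$, define $\mu^{\mathcal{X}}_k=\sigma^{2,\mathcal{X}}_k=(x[k]-\hat{x}[k])^2/(4d^2)$ (so equal to 1, 4 or 9), and define $\mu^{\mathcal{B}}_k=\sigma^{2,\mathcal{B}}_k=(x[k]-\hat{x}[k])^2/(4d^2)$ except when $\{x[k],\hat{x}[k]\}=\{s_1,s_4\}$, in which case $\mu^{\mathcal{B}}_k=3$ and $\sigma^{2,\mathcal{B}}_k=1$. With sums over all $k$ such that $x[k]\neq\hat{x}[k]$, the normalized distances are $a^{\mathcal{X}}(\boldsymbol{x},\hat{\boldsymbol{x}})=\sum_k\mu^{\mathcal{X}}_k/\sqrt{\sum_k\sigma^{2,\mathcal{X}}_k}$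 (symbol-wise ML decoder) and $a^{\mathcal{B}}(\boldsymbol{x},\hat{\boldsymbol{x}})=\sum_k\mu^{\mathcal{B}}_k/\sqrt{\sum_k\sigma^{2,\mathcal{B}}_k}$ (bit-wise max-log decoder under the zero-crossing Gaussian approximation of the L-values), and the asymptotic loss (in dB) of the bit-wise decoder relative to the symbol-wise decoder is $\mathsf{L}(\boldsymbol{x},\hat{\boldsymbol{x}})=20\log_{10}\big(a^{\mathcal{X}}(\boldsymbol{x},\hat{\boldsymbol{x}})/a^{\mathcal{B}}(\boldsymbol{x},\hat{\boldsymbol{x}})\big)$. (The pairwise error probabilities are $Q(a\,d/\sigma_z)$ with $a$ the respective normalized distance.) *)

From mathcomp Require Import all_boot all_order all_algebra.
From mathcomp Require Import reals exp.
Set Implicit Arguments. Unset Strict Implicit. Unset Printing Implicit Defensive.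
Import Order.TTheory GRing.Theory Num.Theory.
Local Open Scope ring_scope.

(* 4-PAM constellation: symbol index i : 'I_4 (i = 0..3 stands for s_1..s_4),
   s_{i+1} = (2 i - 3) d, i.e. -3d, -d, d, 3d. *)
Definition pam4 {R : realType} (d : R) (i : 'I_4) : R :=
  ((2 * (i : nat))%:R - 3) * d.

(* A labeling is described by q = [q_1;q_2;q_3;q_4], q_i = Phi^{-1}(s_i) as an integer. *)
Definition is_gray_labeling (q : 'I_4 -> 'I_4) : bool :=
  [seq (q i : nat) | i <- enum 'I_4] \in
    [:: [:: 0; 1; 3; 2]; [:: 0; 2; 3; 1]; [:: 1; 0; 2; 3]; [:: 2; 0; 1; 3]]%N.

Definition outer_pair (a b : 'I_4) : bool :=
  ((a : nat) == 0%N) && ((b : nat) == 3%N) || ((a : nat) == 3%N) && ((b : nat) == 0%N).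

Definition muX {R : realType} (d : R) (a b : 'I_4) : R :=
  (pam4 d a - pam4 d b) ^+ 2 / (4 * d ^+ 2).
Definition sig2X {R : realType} (d : R) (a b : 'I_4) : R := muX d a b.
Definition muB {R : realType} (d : R) (a b : 'I_4) : R :=
  if outer_pair a b then 3 else muX d a b.
Definition sig2B {R : realType} (d : R) (a b : 'I_4) : R :=
  if outer_pair a b then 1 else muX d a b.

Definition aX {R : realType} (d : R) (N : nat) (x xh : 'I_N -> 'I_4) : R :=
  (\sum_(k < N | x k != xh k) muX d (x k) (xh k)) /
    Num.sqrt (\sum_(k < N | x k != xh k) sig2X d (x k) (xh k)).
Definition aB {R : realType} (d : R) (N : nat) (x xh : 'I_N -> 'I_4) : R :=
  (\sum_(k < N | x k != xh k) muB d (x k) (xh k)) /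
    Num.sqrt (\sum_(k < N | x k != xh k) sig2B d (x k) (xh k)).

Definition log10 {R : realType} (x : R) : R := ln x / ln 10.

Definition asym_loss {R : realType} (d : R) (N : nat) (x xh : 'I_N -> 'I_4) : R :=
  20 * log10 (aX d x xh / aB d x xh).

From mathcomp Require Import all_boot all_order all_algebra.
From mathcomp Require Import reals exp.
From mathcomp Require Import ring lra.
From Stdlib Require Import FunctionalExtensionality.
Import Order.TTheory GRing.Theory Num.Theory.
Local Open Scope ring_scope.

(* Only the outer pair {s_1, s_4} is treated differently by the two decoders:
   its contribution is (9, 9) to (mean, variance) for the symbol-wise decoder
   and (3, 1) for the bit-wise one.  Writing A for the total squared distance
   of the other erroneous positions and m for the number of outer pairs, the
   squared ratio a^X / a^B equals (A + 9m)(A + m) / (A + 3m)^2, which is at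
   most 4/3 because 4(A + 3m)^2 - 3(A + 9m)(A + m) = (A - 3m)^2.  Finally
   10 log10 (4/3) <= 1.25 since (4/3)^8 <= 10. *)

Lemma sum_if_cst (R : nmodType) (I : finType) (P o : pred I) (c : R)
    (F : I -> R) :
  \sum_(i | P i) (if o i then c else F i) =
  \sum_(i | P i && ~~ o i) F i + c *+ #|[pred i | P i && o i]|.
Proof.
rewrite (bigID o) /= addrC -sumr_const; congr (_ + _).
- by apply: eq_bigr => i /andP[_ /negbTE ->].
- by apply: eq_bigr => i /andP[_ ->].
Qed.

Section Distances.

Variables (R : realType) (d : R).
Hypothesis d_gt0 : 0 < d.

Lemma muX_nat (a b : 'I_4) : muX d a b = ((a : nat)%:R - (b : nat)%:R) ^+ 2.
Proof.
rewrite /muX /pam4 !natrM.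
have d_neq0 : d != 0 by rewrite gt_eqF.
by field; rewrite ?mulf_neq0 ?expf_neq0.
Qed.

Lemma muX_ge0 (a b : 'I_4) : 0 <= muX d a b.
Proof. by rewrite muX_nat sqr_ge0. Qed.

Lemma muX_gt0 (a b : 'I_4) : a != b -> 0 < muX d a b.
Proof.
move=> neq_ab; rewrite muX_nat exprn_even_gt0 //= subr_eq0 eqr_nat.
by apply: contra neq_ab => /eqP/val_inj ->.
Qed.

Lemma muX_outer (a b : 'I_4) : outer_pair a b -> muX d a b = 9.
Proof.
rewrite muX_nat /outer_pair.
by case/orP=> /andP[/eqP -> /eqP ->]; rewrite /= ?sub0r ?subr0 ?sqrrN; ring.
Qed.

Lemma muX_if_outer (a b : 'I_4) :
  muX d a b = if outer_pair a b then 9 else muX d a b.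
Proof. by case: ifP => // /muX_outer. Qed.

End Distances.

Lemma ratio_sqr_le_four_thirds (R : rcfType) (A m : R) :
  0 <= A -> 0 <= m -> 0 < A + m ->
  (Num.sqrt (A + 9 * m) / ((A + 3 * m) / Num.sqrt (A + m))) ^+ 2 <= 4 / 3.
Proof.
move=> A_ge0 m_ge0 Am_gt0.
have A3m_gt0 : 0 < A + 3 * m by lra.
rewrite invf_div mulrA !expr_div_n !exprMn !sqr_sqrtr ?ler_pdivrMr ?exprn_gt0 //;
  try lra.
rewrite -subr_ge0.
have -> : 4 / 3 * (A + 3 * m) ^+ 2 - (A + 9 * m) * (A + m) = (A - 3 * m) ^+ 2 / 3
  by field.
by rewrite divr_ge0 ?sqr_ge0.
Qed.

Lemma ln_four_thirds_le (R : realType) : ln (4 / 3 : R) *+ 8 <= ln 10.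
Proof.
have four_thirds_gt0 : (0 : R) < 4 / 3 by rewrite divr_gt0 ?ltr0n.
rewrite -lnXn // ler_ln ?posrE ?exprn_gt0 ?ltr0n //.
have -> : (4 / 3 : R) ^+ 8 = (256 / 81) * (256 / 81) by field.
lra.
Qed.

Lemma twenty_log10_le (R : realType) (r : R) :
  0 < r -> r ^+ 2 <= 4 / 3 -> 20 * log10 r <= 125 / 100.
Proof.
move=> r_gt0 r2_le.
have ln10_gt0 : 0 < ln (10 : R) by rewrite ln_gt0 ?ltr1n.
have ln_r2_le : ln r *+ 2 <= ln (4 / 3 : R).
  by rewrite -lnXn // ler_ln ?posrE ?exprn_gt0 ?divr_gt0 ?ltr0n.
have ln43_le := ln_four_thirds_le R.
rewrite /log10 mulrA ler_pdivrMr //.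
rewrite -mulr_natr in ln_r2_le ln43_le.
move: ln10_gt0 ln_r2_le ln43_le; move: (ln r) (ln (4 / 3 : R)) (ln (10 : R)).
by move=> *; lra.
Qed.

Theorem theorem1 (R : realType) (d : R) (N : nat) (q : 'I_4 -> 'I_4)
  (x xh : 'I_N -> 'I_4) :
  0 < d -> (1 <= N)%N -> is_gray_labeling q -> x <> xh ->
  asym_loss d x xh <= 125 / 100.
Proof.
(* The labeling does not enter the definitions: the Gray property is already
   built into the L-value statistics muB, sig2B. *)
move=> d_gt0 _ _ x_neq_xh.
pose E k := x k != xh k.
pose A := \sum_(k | E k && ~~ outer_pair (x k) (xh k)) muX d (x k) (xh k).
pose m : R := #|[pred k | E k && outer_pair (x k) (xh k)]|%:R.
have sum_if c : \sum_(k | E k)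
    (if outer_pair (x k) (xh k) then c else muX d (x k) (xh k)) = A + c * m.
  by rewrite sum_if_cst mulr_natr.
have A_ge0 : 0 <= A by apply: sumr_ge0 => k _; apply: muX_ge0.
have m_ge0 : 0 <= m by rewrite ler0n.
(* From here on only these facts about A and m are used; hiding the sums
   also keeps lra from unfolding them. *)
clearbody A m.
have [k0 Ek0 | E0] := pickP E; last first.
  by case: x_neq_xh; apply: functional_extensionality => k; apply/eqP/negbFE/E0.
have sumX : \sum_(k | E k) muX d (x k) (xh k) = A + 9 * m.
  by rewrite -sum_if; apply: eq_bigr => k _; apply: muX_if_outer.
have SX_gt0 : 0 < A + 9 * m.
  rewrite -sumX (bigD1 k0) //= ltr_pwDl ?muX_gt0 //.
  by apply: sumr_ge0 => k _; apply: muX_ge0.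
have aXE : aX d x xh = Num.sqrt (A + 9 * m).
  rewrite /aX /sig2X sumX.
  by rewrite -{1}(sqr_sqrtr (ltW SX_gt0)) expr2 mulfK // gt_eqF ?sqrtr_gt0.
have aBE : aB d x xh = (A + 3 * m) / Num.sqrt (A + 1 * m).
  by rewrite /aB /muB /sig2B !sum_if.
rewrite /asym_loss aXE aBE mul1r; apply: twenty_log10_le.
- by rewrite !divr_gt0 ?sqrtr_gt0; lra.
- by apply: ratio_sqr_le_four_thirds => //; lra.
Qed.
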